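(* Let $\mathcal{T}$ be a decision tree of depth $T$ whose edges are colored red and black such that every node has at most one outgoing black edge (edge to a child), and let $G$ be the maximum number of red edges on a root-to-leaf path. Then $\mathsf{WDT}(\mathcal{T})\le 3\sqrt{GT}$.
   Context: A decision tree is a finite rooted tree whose internal nodes each query a coordinate of the input (over a finite alphabet) and whose children correspond to distinct query outcomes; leaves carry outputs; its depth is the maximum number of edges on a root-to-leaf path. A weighting scheme for $\mathcal{T}$ is $w:V\to\mathbb{R}_{\ge0}$ such that $w_v=0$ for all leaves and, for every internal node $v$ with children $C_v$, there exist positive semidefinite $X,Y\in\mathbb{C}^{C_v\times C_v}$ with $X[c_1,c_2]-Y[c_1,c_2]=1$ for all distinct $c_1,c_2\in C_v$ and $w_v-w_c\ge X[c,c]+Y[c,c]$ for all $c\in C_v$. $\mathsf{WDT}(\mathcal{T})$ is the minimum of $w_{\mathrm{root}}$ over all weighting schemes. *)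

From HB Require Import structures.
From mathcomp Require Import all_boot all_order all_algebra.
From mathcomp Require Import complex.
From mathcomp Require Import all_classical all_reals.
Set Implicit Arguments. Unset Strict Implicit. Unset Printing Implicit Defensive.
Import Order.TTheory GRing.Theory Num.Theory.
Local Open Scope ring_scope.

(* A decision tree on inputs in A^n (A a finite alphabet) with outputs in O:
   a leaf carries an output; an internal node queries a coordinate i : 'I_n
   and has a list of children, each labelled by a query outcome. *)
Inductive dtree (n : nat) (A : finType) (O : Type) : Type :=
| DLeaf of O
| DNode of 'I_n & seq (A * dtree n A O).
Arguments DLeaf {n A O}.
Arguments DNode {n A O}.

Fixpoint dtree_wf {n A O} (t : @dtree n A O) : bool :=
  match t with
  | DLeaf _ => true
  | DNode _ cs =>
      [&& (0 < size cs)%N, uniq (map fst cs)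
        & (fix allwf (l : seq (A * dtree n A O)) : bool :=
             match l with [::] => true | c :: l' => dtree_wf c.2 && allwf l' end) cs]
  end.

(* Nodes are addressed by positions: the sequence of child indices along the
   path from the root ([::] is the root, rcons p c is the c-th child of p). *)
Fixpoint subtree {n A O} (t : @dtree n A O) (p : seq nat) : option (@dtree n A O) :=
  match p with
  | [::] => Some t
  | i :: p' =>
      match t with
      | DLeaf _ => None
      | DNode _ cs => obind (fun c => subtree c.2 p') (onth cs i)
      end
  end.

Definition is_node {n A O} (t : @dtree n A O) (p : seq nat) : Prop :=
  exists s, subtree t p = Some s.
Definition is_leaf {n A O} (t : @dtree n A O) (p : seq nat) : Prop :=
  exists o, subtree t p = Some (DLeaf o).

Definition conjT {R : rcfType} {k : nat} (X : 'M[R[i]]_k) : 'M[R[i]]_k :=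
  \matrix_(a, b) Num.conj (X b a).
Definition psd {R : rcfType} {k : nat} (X : 'M[R[i]]_k) : Prop :=
  conjT X = X /\
  forall v : 'cV[R[i]]_k, 0 <= ((map_mx Num.conj v)^T *m X *m v) ord0 ord0.

(* weighting scheme w : V -> R_{>=0} (only its values on nodes matter) *)
Definition weighting_scheme {R : rcfType} {n A O} (t : @dtree n A O)
    (w : seq nat -> R) : Prop :=
  (forall p, is_node t p -> 0 <= w p) /\
  (forall p, is_leaf t p -> w p = 0) /\
  (forall p q cs, subtree t p = Some (DNode q cs) ->
     exists X Y : 'M[R[i]]_(size cs),
       [/\ psd X, psd Y,
           (forall c1 c2 : 'I_(size cs), c1 != c2 -> X c1 c2 - Y c1 c2 = 1) &
           (forall c : 'I_(size cs),
               X c c + Y c c <= real_complex R (w p - w (rcons p c)))]).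

(* WDT(T) = min over weighting schemes of the root weight (taken as inf) *)
Definition WDT {R : realType} {n A O} (t : @dtree n A O) : R :=
  inf [set r : R | exists w : seq nat -> R, weighting_scheme t w /\ w [::] = r].

Definition is_max_nat (S : nat -> Prop) (m : nat) : Prop :=
  S m /\ forall k, S k -> (k <= m)%N.

Definition depth_is {n A O} (t : @dtree n A O) (T : nat) : Prop :=
  is_max_nat (fun k => exists p, is_leaf t p /\ size p = k) T.

(* an edge colouring: red e = true iff the edge entering the node at
   position e (nonempty) is red; false means black *)
Definition red_count (red : seq nat -> bool) (p : seq nat) : nat :=
  count red [seq take j p | j <- iota 1 (size p)].

Definition max_red_is {n A O} (t : @dtree n A O) (red : seq nat -> bool)
    (G : nat) : Prop :=
  is_max_nat (fun k => exists p, is_leaf t p /\ red_count red p = k) G.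

Definition at_most_one_black {n A O} (t : @dtree n A O)
    (red : seq nat -> bool) : Prop :=
  forall p q cs, subtree t p = Some (DNode q cs) ->
    (count (fun c => ~~ red (rcons p c)) (iota 0 (size cs)) <= 1)%N.

From HB Require Import structures.
From mathcomp Require Import all_boot all_order all_algebra.
From mathcomp Require Import complex.
From mathcomp Require Import all_classical all_reals.
From mathcomp Require Import ring lra.
Import Order.TTheory GRing.Theory Num.Theory.
Local Open Scope ring_scope.
Set Implicit Arguments. Unset Strict Implicit.

(** Fix 0 < a <= 1 and b = 2/a - 1, and give an internal node at position p
    the weight a (T - |p|) + b (G - r(p)), where r(p) counts the red edges above
    p; leaves get weight 0.  Since every node lies on a root-to-leaf path, these
    weights are nonnegative, and along an edge the weight drops by at least a,
    plus b if the edge is red.  At a node, X = a^-1 u u^T with u = 1 on red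
    children and u = a on the black one, and Y = (a^-1 - 1) y y^T with y the
    indicator of the red children, satisfy X - Y = 1 off the diagonal because no
    two children are black, while X + Y is a on the black child and b on red
    ones.  Hence WDT <= a T + b G; a = sqrt(G/T) gives 3 sqrt(GT) - G, and for
    G = 0 one lets a tend to 0. *)

Section Positions.
Variables (n : nat) (A : finType) (O : Type).
Implicit Types (t s : dtree n A O) (p e : seq nat).
Implicit Types (q : 'I_n) (cs : seq (A * dtree n A O)).

Lemma dtree_wf_node q cs :
  dtree_wf (DNode q cs) =
  [&& (0 < size cs)%N, uniq (map fst cs)
    & all (fun c : A * dtree n A O => dtree_wf c.2) cs].
Proof. by []. Qed.

Lemma dtree_wf_child q cs i c :
  dtree_wf (DNode q cs) -> onth cs i = Some c -> dtree_wf c.2.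
Proof.
rewrite dtree_wf_node => /and3P [_ _]; elim: cs i => [|c' cs IHcs] [|i] //=.
  by case/andP => wfc _ [<-].
by case/andP => _ /IHcs; apply.
Qed.

Lemma subtree_cat t p e :
  subtree t (p ++ e) = obind (fun s => subtree s e) (subtree t p).
Proof.
elim: p t => [|i p IHp] [o|q cs] //=; case: (onth cs i) => //= c; exact: IHp.
Qed.

Lemma dtree_wf_subtree t p s : dtree_wf t -> subtree t p = Some s -> dtree_wf s.
Proof.
elim: p t => [|i p IHp] [o|q cs] //=; try by move=> wft [<-].
case onth_i: (onth cs i) => [c|] //= wft; apply: IHp.
exact: dtree_wf_child wft onth_i.
Qed.

Fixpoint dtree_wf_has_leaf s : dtree_wf s -> exists e, is_leaf s e.
Proof.
case: s => [o _|q [|[x c] cs]]; [by exists [::], o | by [] |].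
rewrite dtree_wf_node => /and3P [_ _] /= /andP [wfc _].
have [e [o leaf_e]] := dtree_wf_has_leaf c wfc.
by exists (0%N :: e), o.
Qed.

Lemma node_has_leaf_below t p :
  dtree_wf t -> is_node t p -> exists e, is_leaf t (p ++ e).
Proof.
move=> wft [s tp]; have [e [o se]] := dtree_wf_has_leaf (dtree_wf_subtree wft tp).
by exists e, o; rewrite subtree_cat tp.
Qed.

Lemma is_node_child t p q cs (i : nat) :
  subtree t p = Some (DNode q cs) -> (i < size cs)%N -> is_node t (rcons p i).
Proof.
rewrite -onthTE /is_node -cats1 subtree_cat => -> /=.
by case: (onth cs i) => //= c _; exists c.2.
Qed.

End Positions.

Lemma red_count_rcons red p i :
  red_count red (rcons p i) = (red_count red p + red (rcons p i))%N.
Proof.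
rewrite /red_count size_rcons -(addn1 (size p)) iotaD map_cat count_cat /= add1n addn0.
rewrite take_oversize ?size_rcons //; congr (_ + _)%N.
congr count; apply/eq_in_map => j; rewrite mem_iota add1n ltnS => /andP [_ jp].
by rewrite -cats1 takel_cat.
Qed.

Lemma red_count_le_size red p : (red_count red p <= size p)%N.
Proof. by rewrite (leq_trans (count_size _ _)) // size_map size_iota. Qed.

Lemma red_count_cat_le red p e : (red_count red p <= red_count red (p ++ e))%N.
Proof.
elim/last_ind: e => [|e i IHe]; first by rewrite cats0.
by rewrite -rcons_cat red_count_rcons (leq_trans IHe) ?leq_addr.
Qed.

Section NodeBounds.
Variables (n : nat) (A : finType) (O : Type) (t : dtree n A O).
Variables (red : seq nat -> bool) (T G : nat).
Hypothesis wft : dtree_wf t.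

Lemma node_size_le p : depth_is t T -> is_node t p -> (size p <= T)%N.
Proof.
move=> [_ maxT] /(node_has_leaf_below wft) [e leaf_pe].
have := maxT _ (ex_intro _ _ (conj leaf_pe erefl)).
by apply: leq_trans; rewrite size_cat leq_addr.
Qed.

Lemma node_red_count_le p :
  max_red_is t red G -> is_node t p -> (red_count red p <= G)%N.
Proof.
move=> [_ maxG] /(node_has_leaf_below wft) [e leaf_pe].
exact: leq_trans (red_count_cat_le red p e) (maxG _ (ex_intro _ _ (conj leaf_pe erefl))).
Qed.

End NodeBounds.

Lemma max_red_le_depth n (A : finType) (O : Type) (t : dtree n A O) red T G :
  depth_is t T -> max_red_is t red G -> (G <= T)%N.
Proof.
move=> [_ maxT] [[p [leaf_p <-]] _].
exact: leq_trans (red_count_le_size red p) (maxT _ (ex_intro _ p (conj leaf_p erefl))).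
Qed.

Section Gadget.
Variable R : rcfType.
Local Notation "x %:C" := (real_complex R x).

Lemma conj_real_complex (x : R) : Num.conj x%:C = x%:C.
Proof. by rewrite conj_Creal // complex_real. Qed.

Definition rank1_mx k (c : R) (u : 'I_k -> R) : 'M[R[i]]_k :=
  \matrix_(i, j) (c * u i * u j)%:C.

Lemma psd_rank1_mx k (c : R) (u : 'I_k -> R) : 0 <= c -> psd (rank1_mx c u).
Proof.
move=> c_ge0; split.
  by apply/matrixP => i j; rewrite !mxE conj_real_complex mulrAC.
move=> v; pose s := \sum_i (u i)%:C * v i ord0.
have -> : ((map_mx Num.conj v)^T *m rank1_mx c u *m v) ord0 ord0
          = c%:C * (Num.conj s * s).
  rewrite mxE /s rmorph_sum big_distrl mulr_sumr /=.
  under [RHS]eq_bigr do rewrite mulr_sumr mulr_sumr.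
  rewrite exchange_big /=; apply: eq_bigr => j _.
  rewrite mxE big_distrl /=; apply: eq_bigr => i _.
  by rewrite !mxE !rmorphM /= !conj_real_complex; ring.
by rewrite mulr_ge0 ?lecR // mulrC mul_conjC_ge0.
Qed.

Lemma red_black_gadget k (a : R) (is_red : 'I_k -> bool) :
  0 < a <= 1 -> (forall c1 c2, c1 != c2 -> is_red c1 || is_red c2) ->
  exists X Y : 'M[R[i]]_k,
    [/\ psd X, psd Y,
        (forall c1 c2, c1 != c2 -> X c1 c2 - Y c1 c2 = 1) &
        (forall c, X c c + Y c c = (if is_red c then 2 / a - 1 else a)%:C)].
Proof.
move=> /andP [a_gt0 a_le1] red_pair.
have a_neq0 : a != 0 by rewrite gt_eqF.
pose u c : R := if is_red c then 1 else a.
pose y c : R := if is_red c then 1 else 0.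
exists (rank1_mx a^-1 u), (rank1_mx (a^-1 - 1) y); split.
- by apply: psd_rank1_mx; rewrite invr_ge0 ltW.
- by apply: psd_rank1_mx; rewrite subr_ge0 invf_ge1.
- move=> c1 c2 /red_pair; rewrite !mxE -rmorphB -(rmorph1 (real_complex R)) /u /y.
  by case: (is_red c1); case: (is_red c2) => //= _; congr _%:C; field.
- move=> c; rewrite !mxE -rmorphD /u /y; congr _%:C.
  by case: (is_red c); field.
Qed.

End Gadget.

Lemma count_le1_distinct k (black : nat -> bool) :
  (count black (iota 0 k) <= 1)%N ->
  forall c1 c2 : 'I_k, c1 != c2 -> ~~ black c1 || ~~ black c2.
Proof.
move=> count_le1 c1 c2 c12; rewrite -negb_and; apply: contraTN count_le1.
case/andP => black1 black2; rewrite -ltnNge -size_filter.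
apply: (@uniq_leq_size _ [:: val c1; val c2]) => [|j].
  by rewrite /= inE andbT val_eqE.
by rewrite !inE mem_filter mem_iota => /orP [] /eqP ->; rewrite ?black1 ?black2 ltn_ord.
Qed.

Section Potential.
Variables (R : rcfType) (n : nat) (A : finType) (O : Type) (t : dtree n A O).
Variables (red : seq nat -> bool) (T G : nat) (a : R).
Hypotheses (wft : dtree_wf t) (depth_t : depth_is t T).
Hypotheses (black_t : at_most_one_black t red) (max_red_t : max_red_is t red G).
Hypothesis a_range : 0 < a <= 1.

Let b := 2 / a - 1.

Lemma potential_coef_ge0 : 0 <= a /\ 0 <= b.
Proof.
case/andP: a_range => a_gt0 a_le1; split; first exact: ltW.
by rewrite subr_ge0 ler_pdivlMr //; lra.
Qed.

Definition potential (p : seq nat) : R :=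
  a * (T%:R - (size p)%:R) + b * (G%:R - (red_count red p)%:R).

Definition potential_weight (p : seq nat) : R :=
  if subtree t p is Some (DNode _ _) then potential p else 0.

Lemma potential_rcons p i :
  potential p - potential (rcons p i) = a + b * (red (rcons p i))%:R.
Proof. by rewrite /potential red_count_rcons size_rcons !natrD; ring. Qed.

Lemma potential_ge0 p : is_node t p -> 0 <= potential p.
Proof.
move=> node_p; have [a_ge0 b_ge0] := potential_coef_ge0.
rewrite addr_ge0 // mulr_ge0 // subr_ge0 ler_nat.
  exact: (node_size_le wft depth_t node_p).
exact: (node_red_count_le wft max_red_t node_p).
Qed.

Lemma potential_weight_bounds p :
  is_node t p -> 0 <= potential_weight p <= potential p.
Proof.
move=> node_p; have pot_ge0 := potential_ge0 node_p.
by rewrite /potential_weight; case: (subtree t p) => [[_|_ _]|]; rewrite lexx pot_ge0.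
Qed.

Lemma potential_weighting_scheme : weighting_scheme t potential_weight.
Proof.
split; [|split].
- by move=> p /potential_weight_bounds /andP [].
- by move=> p [o leaf_p]; rewrite /potential_weight leaf_p.
move=> p q cs tp.
have [|X [Y [psdX psdY offXY diagXY]]] :=
  red_black_gadget (is_red := fun c : 'I_(size cs) => red (rcons p c)) a_range.
  by move=> c1 c2 /(count_le1_distinct (black_t tp)); rewrite !negbK.
exists X, Y; split => // c; rewrite diagXY lecR.
have /potential_weight_bounds /andP [_ wc_le] := is_node_child tp (ltn_ord c).
have [a_ge0 b_ge0] := potential_coef_ge0.
have := potential_rcons p c; rewrite {1}/potential_weight tp -/b.
by case: (red _) => /=; lra.
Qed.

End Potential.

Lemma WDT_le_tradeoff (R : realType) n (A : finType) (O : Type) (t : dtree n A O)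
    (red : seq nat -> bool) (T G : nat) (a : R) :
  dtree_wf t -> depth_is t T -> at_most_one_black t red -> max_red_is t red G ->
  0 < a <= 1 -> WDT (R := R) t <= a * T%:R + (2 / a - 1) * G%:R.
Proof.
move=> wft depth_t black_t max_red_t a_range.
have scheme := potential_weighting_scheme wft depth_t black_t max_red_t a_range.
have root_node : is_node t [::] by exists t.
have lb : has_lbound [set r : R | exists w, weighting_scheme t w /\ w [::] = r].
  by exists 0 => _ [w [[w_ge0 _] <-]]; exact: w_ge0.
apply: le_trans (ge_inf lb (ex_intro _ _ (conj scheme erefl))) _.
have /andP [_ /le_trans] := potential_weight_bounds wft depth_t max_red_t a_range root_node.
by apply; rewrite /potential !subr0.
Qed.

Lemma le0_of_le_scaled (R : realFieldType) (x c : R) :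
  (forall a, 0 < a <= 1 -> x <= a * c) -> x <= 0.
Proof.
move=> le_scaled; rewrite leNgt; apply/negP => x_gt0.
have x_le_c : x <= c by rewrite -[c]mul1r le_scaled ?ltr01 ?lexx.
have xc_gt0 : 0 < x + c by rewrite addr_gt0 // (lt_le_trans x_gt0).
have := le_scaled (x / (x + c)).
rewrite divr_gt0 // ler_pdivrMr // mul1r lerDl (le_trans (ltW x_gt0)) //=.
by rewrite mulrAC ler_pdivlMr // => /(_ isT); nra.
Qed.

Lemma sqrt_tradeoff (R : rcfType) (g t : R) : 0 < g -> g <= t ->
  exists2 a, 0 < a <= 1 & a * t + (2 / a - 1) * g <= 3 * Num.sqrt (g * t).
Proof.
move=> g_gt0 g_le_t; have t_gt0 := lt_le_trans g_gt0 g_le_t.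
set s := Num.sqrt (g * t).
have s_sq : s * s = g * t by rewrite -expr2 sqr_sqrtr // mulr_ge0 // ltW.
have s_gt0 : 0 < s by rewrite sqrtr_gt0 mulr_gt0.
have s_le_t : s <= t by nra.
exists (s / t); first by rewrite divr_gt0 //= ler_pdivrMr // mul1r.
have g_eq : g = s * s / t by rewrite s_sq mulfK ?gt_eqF.
have -> : s / t * t + (2 / (s / t) - 1) * g = 3 * s - g.
  by rewrite g_eq; field; rewrite ?gt_eqF.
by rewrite gerBl ltW.
Qed.

Unset Implicit Arguments.

Theorem theorem6p4 (R : realType) (n : nat) (A : finType) (O : Type)
    (t : dtree n A O) (red : seq nat -> bool) (T G : nat) :
  dtree_wf t ->
  depth_is t T ->
  at_most_one_black t red ->
  max_red_is t red G ->
  WDT (R := R) t <= 3 * Num.sqrt ((G * T)%:R).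
Proof.
move=> wft depth_t black_t max_red_t.
have WDT_le (a : R) := WDT_le_tradeoff (a := a) wft depth_t black_t max_red_t.
have [G0 | G_gt0] := posnP G.
  rewrite G0 mul0n sqrtr0 mulr0; apply: (le0_of_le_scaled (c := T%:R)) => a /WDT_le.
  by rewrite G0 mulr0 addr0.
have G_le_T : G%:R <= T%:R :> R by rewrite ler_nat (max_red_le_depth depth_t max_red_t).
have G_pos : 0 < G%:R :> R by rewrite ltr0n.
have [a a_range] := sqrt_tradeoff G_pos G_le_T.
by rewrite natrM; apply: le_trans (WDT_le a a_range).
Qed.
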